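(* Let $(H,\mathcal{P}=\{P_h\}_{h\in[H]},r)$ and $(H,\widehat{\mathcal{P}}=\{\widehat P_h\}_{h\in[H]},r)$ be two episodic MDPs with the same state space $\mathcal{S}$, action space $\mathcal{A}$, initial state $s_1$ and reward distributions $r$. For any fixed $c\in[0,1]$ and any augmented policy $\pi=\{\pi_h:\mathcal{S}\times[0,H]\to\Delta(\mathcal{A})\}_{h\in[H]}$, $$V_{1,\mathcal{P},0}^\pi(s_1,c)-V_{1,\widehat{\mathcal{P}},0}^\pi(s_1,c)\le H\cdot\sum_{h=1}^H \mathbb{E}_{(s,a)\sim d_{h,\mathcal{P}}^{(\pi,c)}}\left[f_h(s,a)\right],$$ where $f_h(s,a)=\|P_h(\cdot\mid s,a)-\widehat P_h(\cdot\mid s,a)\|_1$.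
   Context: Rewards $r_h(s,a)$ are distributions on $[0,1]$. In the augmented MDP the state is $(s,c)$ with remaining budget $c$, updated by $c_{h+1}=c_h-r_h$ after receiving reward $r_h$; an augmented policy chooses $a_h\sim\pi_h(\cdot\mid s_h,c_h)$. For a transition kernel family $\mathcal{P}$, $V^\pi_{1,\mathcal{P},0}(s_1,c)=\mathbb{E}_{\pi,\mathcal{P}}[(c-\sum_{h=1}^H r_h)^+\mid c_1=c]$ with $x^+=\max(x,0)$. $d^{(\pi,c)}_{h,\mathcal{P}}(s,a)$ is the probability that $(s_h,a_h)=(s,a)$ when running $\pi$ from $(s_1,c)$ under $\mathcal{P}$. *)

From HB Require Import structures.
From mathcomp Require Import all_boot all_order all_algebra.
From mathcomp Require Import all_classical all_reals all_analysis.
Set Implicit Arguments. Unset Strict Implicit. Unset Printing Implicit Defensive.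
Import Order.TTheory GRing.Theory Num.Theory.
Import numFieldNormedType.Exports.
Local Open Scope classical_set_scope.
Local Open Scope ring_scope.

(* Episodic MDP with finite state space S, finite action space A, horizon H,
   steps indexed h = 1..H.
   - P h s a s'  : transition probability P_h(s' | s, a)
   - r h s a     : reward distribution (probability measure on R, supported on [0,1])
   - pi h s c a  : augmented policy pi_h(a | s, c), c = remaining budget.
   The augmented process: from (s_h, c_h), draw a_h ~ pi_h(.|s_h,c_h),
   reward r_h ~ r h s_h a_h, next state s_{h+1} ~ P_h(.|s_h,a_h),
   and c_{h+1} = c_h - r_h. *)

Section AugMDP.
Variables (R : realType) (S A : finType) (H : nat).
Variables (P : nat -> S -> A -> S -> R)
          (r : nat -> S -> A -> probability R R)
          (pi : nat -> S -> R -> A -> R).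

(* augV n s c = E[(c_{H-n+1} - sum_{h=H-n+1}^H r_h)^+ | s_{H-n+1} = s, c_{H-n+1} = c],
   i.e. the value V^pi_{H-n+1,P,0}(s,c) with n steps remaining. *)
Fixpoint augV (n : nat) (s : S) (c : R) : R :=
  match n with
  | 0 => Num.max c 0
  | n'.+1 =>
      let h := (H - n')%N in
      \sum_(a : A) pi h s c a *
        \sum_(s' : S) P h s a s' *
          Rintegral (r h s a) setT (fun x => augV n' s' (c - x))
  end.

(* augOcc h0 s0 a0 n s c = probability that (s_{h0}, a_{h0}) = (s0, a0) when the
   augmented process is run from state (s, c) at step H-n+1 (for H-n+1 <= h0). *)
Fixpoint augOcc (h0 : nat) (s0 : S) (a0 : A) (n : nat) (s : S) (c : R) : R :=
  match n with
  | 0 => 0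
  | n'.+1 =>
      let h := (H - n')%N in
      if h == h0 then (if s == s0 then pi h s c a0 else 0)
      else
      \sum_(a : A) pi h s c a *
        \sum_(s' : S) P h s a s' *
          Rintegral (r h s a) setT (fun x => augOcc h0 s0 a0 n' s' (c - x))
  end.

End AugMDP.

Definition V1 (R : realType) (S A : finType) (H : nat)
  (P : nat -> S -> A -> S -> R) (r : nat -> S -> A -> probability R R)
  (pi : nat -> S -> R -> A -> R) (s1 : S) (c : R) : R :=
  augV H P r pi H s1 c.

Definition occ (R : realType) (S A : finType) (H : nat)
  (P : nat -> S -> A -> S -> R) (r : nat -> S -> A -> probability R R)
  (pi : nat -> S -> R -> A -> R) (s1 : S) (c : R) (h : nat) (s : S) (a : A) : R :=
  augOcc H P r pi h s a H s1 c.

Definition is_kernel (R : realType) (S A : finType) (H : nat)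
  (P : nat -> S -> A -> S -> R) : Prop :=
  forall h, (0 < h <= H)%N -> forall s a,
    (forall s', 0 <= P h s a s') /\ \sum_(s' : S) P h s a s' = 1.

Definition is_aug_policy (R : realType) (S A : finType) (H : nat)
  (pi : nat -> S -> R -> A -> R) : Prop :=
  forall h, (0 < h <= H)%N -> forall s,
    (forall c a, 0 <= pi h s c a) /\ (forall c, \sum_(a : A) pi h s c a = 1) /\
    (forall a, measurable_fun setT (fun c => pi h s c a)).

(* One step of the budget-augmented Bellman recursion gives
   P V_P - Phat V_Phat = (P - Phat) V_Phat + P (V_P - V_Phat).  The budget
   starts at most 1 and never increases, so V_Phat takes values in [0, 1] and
   the first term is at most the L1 distance f_h(s, a); unrolling the second
   term along the trajectories of P yields
   V_P - V_Phat <= sum_h E_(d_h)[f_h], which is the claim without the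
   factor H. *)

From HB Require Import structures.
From mathcomp Require Import all_boot all_order all_algebra.
From mathcomp Require Import all_classical all_reals all_analysis.
From mathcomp Require Import measurable_realfun zify ring.
Set Implicit Arguments. Unset Strict Implicit. Unset Printing Implicit Defensive.
Import Order.TTheory GRing.Theory Num.Theory.
Import numFieldNormedType.Exports.
Local Open Scope classical_set_scope.
Local Open Scope ring_scope.

Section integral_on01.
Context {R : realType}.
Implicit Types (f g d : R -> R) (c M : R).

Definition D01 : set R := [set x | 0 <= x <= 1].

Lemma measurable_D01 : measurable D01.
Proof.
rewrite (_ : D01 = `[0, 1]%classic); first exact: measurable_itv.
by apply/seteqP; split => x /=; rewrite in_itv.
Qed.

(* Integrands such as x |-> max (y - x) 0 are unbounded on R, but the reward
   distributions live on [0, 1], where boundedness suffices for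
   integrability. *)
Definition bounded01 (f : R -> R) :=
  measurable_fun setT f /\ exists M, forall x, D01 x -> `|f x| <= M.

Lemma bounded01_shift (G : R -> R) y M : measurable_fun setT G ->
  (forall x, D01 x -> `|G (y - x)| <= M) -> bounded01 (fun x => G (y - x)).
Proof.
move=> mG GM; split; last by exists M.
apply: measurableT_comp mG _.
exact: measurable_funB (measurable_cst y) (@measurable_id _ _ _).
Qed.

Lemma bounded01D f g :
  bounded01 f -> bounded01 g -> bounded01 (fun x => f x + g x).
Proof.
move=> [mf [Mf fM]] [mg [Mg gM]]; split; first exact: measurable_funD.
by exists (Mf + Mg) => x D01x; rewrite (le_trans (ler_normD _ _)) ?lerD ?fM ?gM.
Qed.

Lemma bounded01B f g :
  bounded01 f -> bounded01 g -> bounded01 (fun x => f x - g x).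
Proof.
move=> [mf [Mf fM]] [mg [Mg gM]]; split; first exact: measurable_funB.
by exists (Mf + Mg) => x D01x; rewrite (le_trans (ler_normB _ _)) ?lerD ?fM ?gM.
Qed.

Lemma bounded01Mr f c : bounded01 f -> bounded01 (fun x => f x * c).
Proof.
move=> [mf [M fM]]; split; first exact: measurable_funM mf (measurable_cst c).
by exists (M * `|c|) => x D01x; rewrite normrM ler_wpM2r ?fM.
Qed.

Lemma bounded01_sum (I : Type) (l : seq I) (F : I -> R -> R) :
  (forall i, bounded01 (F i)) -> bounded01 (fun x => \sum_(i <- l) F i x).
Proof.
move=> bF; elim: l => [|i l IH].
  split; first by under eq_fun do rewrite big_nil; exact: measurable_cst.
  by exists 0 => x _; rewrite big_nil normr0.
by under eq_fun do rewrite big_cons; exact: bounded01D.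
Qed.

Lemma measurable_Rintegral_shift (mu : {sigma_finite_measure set R -> \bar R})
  (F : R -> R) :
  measurable_fun setT F -> (forall z, 0 <= F z) ->
  measurable_fun setT (fun y : R => Rintegral mu setT (fun x => F (y - x))).
Proof.
move=> mF F0.
have mFB : measurable_fun [set: R * R] (fun p : R * R => (F (p.1 - p.2))%:E).
  apply/measurable_EFinP; apply: measurableT_comp mF _.
  exact: measurable_funB measurable_fst measurable_snd.
have F0E p : (0 <= (F (p.1 - p.2))%:E)%E by rewrite lee_fin.
exact: measurableT_comp (fine_measurable measurableT)
  (measurable_fun_fubini_tonelli_F (m2 := mu) _ mFB F0E).
Qed.

Variable mu : probability R R.
Hypothesis mu01 : mu D01 = 1%E.

Lemma measure_notD01 : mu (~` D01) = 0%E.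
Proof. by rewrite probability_setC ?mu01 ?subee //; exact: measurable_D01. Qed.

Lemma bounded01_integrable f : bounded01 f -> mu.-integrable setT (EFin \o f).
Proof.
move=> [mf [M fM]].
apply/(negligible_integrable _ _ _ measure_notD01) => //.
- exact: measurableC measurable_D01.
- exact/measurable_EFinP.
rewrite setTD setCK.
apply: (le_integrable measurable_D01 _ _
  (finite_measure_integrable_cst _ M measurable_D01)).
  exact/measurable_EFinP/(measurable_funS measurableT).
move=> x /fM fxM /=; rewrite lee_fin.
exact: le_trans fxM (ler_norm _).
Qed.

Lemma bounded01_integrable01 f : bounded01 f -> mu.-integrable D01 (EFin \o f).
Proof.
move=> /bounded01_integrable; apply: integrableS => //; exact: measurable_D01.
Qed.

Lemma Rintegral_setT01 f :
  bounded01 f -> Rintegral mu setT f = Rintegral mu D01 f.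
Proof.
move=> bf.
rewrite /Rintegral (negligible_integral _ _ _ measure_notD01) ?setTD ?setCK //.
- exact: measurableC measurable_D01.
- exact: bounded01_integrable.
Qed.

Lemma Rintegral01_bounds f M : measurable_fun setT f ->
  (forall x, D01 x -> 0 <= f x <= M) -> 0 <= Rintegral mu setT f <= M.
Proof.
move=> mf fM; have bf : bounded01 f.
  by split => //; exists M => x /fM /andP[f0 fxM]; rewrite ger0_norm.
rewrite Rintegral_setT01 //; apply/andP; split.
  by apply: Rintegral_ge0 => x /fM /andP[].
rewrite -[leRHS]mulr1 -[1 in leRHS]/(fine 1%E) -mu01 -Rintegral_cst; last first.
  exact: measurable_D01.
apply: le_Rintegral; first exact: measurable_D01.
- exact: bounded01_integrable01.
- exact: finite_measure_integrable_cst measurable_D01.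
by move=> x /fM /andP[].
Qed.

Lemma le_Rintegral01B f g d : bounded01 f -> bounded01 g -> bounded01 d ->
  (forall x, D01 x -> f x - g x <= d x) ->
  Rintegral mu setT f - Rintegral mu setT g <= Rintegral mu setT d.
Proof.
move=> bf bg bd fgd.
rewrite -RintegralB ?bounded01_integrable // !Rintegral_setT01 //; last first.
  exact: bounded01B.
apply: le_Rintegral fgd; first exact: measurable_D01.
- exact/bounded01_integrable01/bounded01B.
- exact: bounded01_integrable01.
Qed.

Lemma Rintegral01_sum (I : Type) (l : seq I) (F : I -> R -> R) :
  (forall i, bounded01 (F i)) ->
  Rintegral mu setT (fun x => \sum_(i <- l) F i x) =
  \sum_(i <- l) Rintegral mu setT (F i).
Proof.
move=> bF; elim: l => [|i l IH].
  under eq_Rintegral do rewrite big_nil.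
  by rewrite big_nil Rintegral_cst // mul0r.
under eq_Rintegral do rewrite big_cons.
rewrite RintegralD ?big_cons ?IH ?bounded01_integrable //.
exact: bounded01_sum.
Qed.

Lemma Rintegral01Mr f c : bounded01 f ->
  Rintegral mu setT (fun x => f x * c) = Rintegral mu setT f * c.
Proof. by move=> bf; rewrite RintegralZr ?bounded01_integrable. Qed.

End integral_on01.

Lemma convex_comb_bounds {R : realType} (I : finType) (w x : I -> R) M :
  (forall i, 0 <= w i) -> \sum_i w i = 1 -> (forall i, 0 <= x i <= M) ->
  0 <= \sum_i w i * x i <= M.
Proof.
move=> w0 w1 xM; apply/andP; split.
  by apply: sumr_ge0 => i _; case/andP: (xM i) => x0 _; rewrite mulr_ge0.
rewrite -[leRHS]mul1r -w1 big_distrl /=; apply: ler_sum => i _.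
by case/andP: (xM i) => _ xiM; rewrite ler_wpM2l.
Qed.

Lemma lerBM_dist {R : realType} (p q u v : R) : 0 <= v <= 1 ->
  p * u - q * v <= `|p - q| + p * (u - v).
Proof.
case/andP=> v0 v1.
have -> : p * u - q * v = (p - q) * v + p * (u - v) by ring.
rewrite lerD2r (le_trans (ler_norm _)) // normrM (ger0_norm v0).
exact: ler_piMr.
Qed.

Definition l1_dist {R : realType} (S : finType) (p q : S -> R) : R :=
  \sum_s `|p s - q s|.

Section augmented_MDP.
Variables (R : realType) (S A : finType) (H : nat).
Variables (r : nat -> S -> A -> probability R R) (pi : nat -> S -> R -> A -> R).
Hypothesis r01 : forall h, (0 < h <= H)%N -> forall s a, r h s a D01 = 1%E.
Hypothesis pi_policy : is_aug_policy H pi.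
Implicit Types (K P Q : nat -> S -> A -> S -> R) (F G : S -> R -> R).

Definition bellman K h s F (y : R) : R :=
  \sum_a pi h s y a * \sum_s' K h s a s' *
    Rintegral (r h s a) setT (fun x => F s' (y - x)).

Lemma augV_S K n s y :
  augV H K r pi n.+1 s y = bellman K (H - n) s (augV H K r pi n) y.
Proof. by []. Qed.

Lemma augOcc_S K h0 s0 a0 n s y :
  augOcc H K r pi h0 s0 a0 n.+1 s y =
  if (H - n)%N == h0 then (if s == s0 then pi (H - n) s y a0 else 0)
  else bellman K (H - n) s (augOcc H K r pi h0 s0 a0 n) y.
Proof. by []. Qed.

Lemma bellman0 K h s y : bellman K h s (fun _ _ => 0) y = 0.
Proof.
rewrite /bellman big1 // => a _; rewrite big1 ?mulr0 // => s' _.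
by rewrite Rintegral_cst // mul0r mulr0.
Qed.

Lemma augOcc_before K h0 s0 a0 n : (h0 + n <= H)%N ->
  forall s y, augOcc H K r pi h0 s0 a0 n s y = 0.
Proof.
elim: n => [//|n IH] h0nH s y.
rewrite augOcc_S ifN_eq; last by apply/eqP; lia.
rewrite (_ : augOcc H K r pi h0 s0 a0 n = fun _ _ => 0) ?bellman0 //.
by apply/funext => s'; apply/funext => z; apply: IH; lia.
Qed.

Lemma augOccS_split K h0 s0 a0 n s y : (n < H)%N ->
  augOcc H K r pi h0 s0 a0 n.+1 s y =
  (if ((H - n)%N == h0) && (s == s0) then pi (H - n) s y a0 else 0) +
  bellman K (H - n) s (augOcc H K r pi h0 s0 a0 n) y.
Proof.
move=> nH; rewrite augOcc_S; case: eqP => [<-|_]; last by rewrite add0r.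
rewrite (_ : augOcc H K r pi (H - n) s0 a0 n = fun _ _ => 0).
  by rewrite bellman0 addr0.
by apply/funext => s'; apply/funext => z; apply: augOcc_before; lia.
Qed.

Section bellman_step.
Variable h : nat.
Hypothesis h_step : (0 < h <= H)%N.

Lemma measurable_bellman K s F :
  (forall s', measurable_fun setT (F s')) -> (forall s' z, 0 <= F s' z) ->
  measurable_fun setT (bellman K h s F).
Proof.
have [_ [_ mpi]] := pi_policy h_step s.
move=> mF F0; apply: measurable_sum => a.
apply: measurable_funM; first exact: mpi.
apply: measurable_sum => s'.
apply: measurable_funM; first exact: measurable_cst.
exact: measurable_Rintegral_shift.
Qed.

Lemma bellman_bounds K s F y M : is_kernel H K ->
  (forall s', measurable_fun setT (F s')) ->
  (forall s' x, D01 x -> 0 <= F s' (y - x) <= M) ->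
  0 <= bellman K h s F y <= M.
Proof.
have [pi0 [pi1 _]] := pi_policy h_step s.
move=> K_kernel mF FM; apply: convex_comb_bounds => // a.
have [K0 K1] := K_kernel _ h_step s a; apply: convex_comb_bounds => // s'.
apply: (Rintegral01_bounds (f := fun x => F s' (y - x)) (r01 h_step s a) _
  (FM s')).
apply: measurableT_comp (mF s') _.
exact: measurable_funB (measurable_cst y) (@measurable_id _ _ _).
Qed.

Lemma bellman_sum (I : Type) (l : seq I) K s (F : I -> S -> R -> R) y :
  (forall i s', bounded01 (fun x => F i s' (y - x))) ->
  bellman K h s (fun s' z => \sum_(i <- l) F i s' z) y =
  \sum_(i <- l) bellman K h s (F i) y.
Proof.
move=> bF; rewrite /bellman.
under eq_bigr => a _ do under eq_bigr => s' _ do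
  rewrite (Rintegral01_sum (r01 h_step s a) _ (bF^~ s')) mulr_sumr.
under eq_bigr => a _ do rewrite exchange_big mulr_sumr.
by rewrite exchange_big.
Qed.

Lemma bellmanMr K s F c y : (forall s', bounded01 (fun x => F s' (y - x))) ->
  bellman K h s (fun s' z => F s' z * c) y = bellman K h s F y * c.
Proof.
move=> bF; rewrite /bellman big_distrl /=; apply: eq_bigr => a _.
rewrite -mulrA big_distrl /=; congr (_ * _); apply: eq_bigr => s' _.
by rewrite (Rintegral01Mr (r01 h_step s a)) // mulrA.
Qed.

Lemma bellman_sub_le P Q s F G D y : is_kernel H P -> is_kernel H Q ->
  (forall s', bounded01 (fun x => F s' (y - x))) ->
  (forall s', bounded01 (fun x => G s' (y - x))) ->
  (forall s', bounded01 (fun x => D s' (y - x))) ->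
  (forall s' x, D01 x -> 0 <= G s' (y - x) <= 1) ->
  (forall s' x, D01 x -> F s' (y - x) - G s' (y - x) <= D s' (y - x)) ->
  bellman P h s F y - bellman Q h s G y <=
  \sum_a pi h s y a * l1_dist (P h s a) (Q h s a) + bellman P h s D y.
Proof.
have [pi0 _] := pi_policy h_step s.
move=> P_kernel _ bF bG bD G01 FGD.
rewrite /bellman -sumrB -big_split; apply: ler_sum => a _ /=.
rewrite -mulrBr -mulrDr ler_wpM2l // -sumrB /l1_dist -big_split.
apply: ler_sum => s' _ /=; have [P0 _] := P_kernel _ h_step s a.
have [mG _] := bG s'.
have IG01 := Rintegral01_bounds (r01 h_step s a) mG (G01 s').
apply: le_trans (lerBM_dist _ _ _ IG01) _.
rewrite lerD2l ler_wpM2l //.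
apply: (le_Rintegral01B (r01 h_step s a) (bF s') (bG s') (bD s')).
exact: FGD.
Qed.

End bellman_step.

Lemma step_in_horizon n : (n < H)%N -> (0 < H - n <= H)%N.
Proof. by move=> nH; apply/andP; split; lia. Qed.

Section kernel.
Variable K : nat -> S -> A -> S -> R.
Hypothesis K_kernel : is_kernel H K.

Lemma measurable_bounded_augV n : (n <= H)%N -> forall s,
  measurable_fun setT (augV H K r pi n s) /\
  forall y, 0 <= augV H K r pi n s y <= Num.max y 0.
Proof.
elim: n => [_ s|n IH nH s].
  split; last by move=> y; rewrite /= lexx andbT le_max lexx orbT.
  rewrite (_ : augV H K r pi 0 s = (@id R) \max (cst 0)) //.
  exact: measurable_maxr.
have hstep := step_in_horizon nH; have {}IH := IH (ltnW nH).
split.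
  change (measurable_fun setT (bellman K (H - n) s (augV H K r pi n))).
  have V0 s' z : 0 <= augV H K r pi n s' z by case/andP: ((IH s').2 z).
  exact: (measurable_bellman hstep K s (fun s' => (IH s').1) V0).
move=> y; rewrite augV_S.
apply: (bellman_bounds hstep s K_kernel (fun s' => (IH s').1)).
move=> s' x /andP[x0 _].
have /andP[V0 V1] := (IH s').2 (y - x).
by rewrite V0 (le_trans V1) // le_max2 // gerBl.
Qed.

Lemma measurable_bounded_augOcc n : (n <= H)%N -> forall h0 s0 a0 s,
  measurable_fun setT (augOcc H K r pi h0 s0 a0 n s) /\
  forall y, 0 <= augOcc H K r pi h0 s0 a0 n s y <= 1.
Proof.
elim: n => [_ h0 s0 a0 s|n IH nH h0 s0 a0 s].
  by split; [exact: measurable_cst | move=> y; rewrite lexx ler01].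
have hstep := step_in_horizon nH; have {}IH := IH (ltnW nH) h0 s0 a0.
have [pi0 [pi1 mpi]] := pi_policy hstep s.
split.
  rewrite (_ : augOcc H K r pi h0 s0 a0 n.+1 s = if (H - n)%N == h0 then
      (if s == s0 then pi (H - n) s ^~ a0 else cst 0)
    else bellman K (H - n) s (augOcc H K r pi h0 s0 a0 n)); last first.
    by apply/funext => y; rewrite augOcc_S; case: eqP => // _; case: eqP.
  case: ifP => _; first by case: ifP => _; [exact: mpi | exact: measurable_cst].
  have O0 s' z : 0 <= augOcc H K r pi h0 s0 a0 n s' z.
    by case/andP: ((IH s').2 z).
  exact: (measurable_bellman hstep K s (fun s' => (IH s').1) O0).
move=> y; rewrite augOcc_S; case: ifP => _.
  case: ifP => _; last by rewrite lexx ler01.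
  by rewrite pi0 -(pi1 y) (bigD1 a0) //= lerDl sumr_ge0.
apply: (bellman_bounds hstep s K_kernel (fun s' => (IH s').1)) => s' x _.
exact: (IH s').2.
Qed.

Lemma bounded01_augV n s' y : (n <= H)%N ->
  bounded01 (fun x => augV H K r pi n s' (y - x)).
Proof.
move=> nH; have [mV bV] := measurable_bounded_augV nH s'.
apply: (bounded01_shift (M := Num.max y 0) mV) => x /andP[x0 _].
have /andP[V0 V1] := bV (y - x).
by rewrite ger0_norm // (le_trans V1) // le_max2 // gerBl.
Qed.

Lemma bounded01_augOcc n h0 s0 a0 s' y : (n <= H)%N ->
  bounded01 (fun x => augOcc H K r pi h0 s0 a0 n s' (y - x)).
Proof.
move=> nH; have [mO bO] := measurable_bounded_augOcc nH h0 s0 a0 s'.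
apply: (bounded01_shift (M := 1) mO) => x _.
by case/andP: (bO (y - x)) => O0 O1; rewrite ger0_norm.
Qed.

Definition occ_mean (g : nat -> S -> A -> R) n s y : R :=
  \sum_(1 <= h < H.+1) \sum_s0 \sum_a0
    augOcc H K r pi h s0 a0 n s y * g h s0 a0.

Lemma occ_mean_ge0 g n s y : (n <= H)%N -> (forall h s a, 0 <= g h s a) ->
  0 <= occ_mean g n s y.
Proof.
move=> nH g0; apply: sumr_ge0 => h0 _; apply: sumr_ge0 => s0 _.
apply: sumr_ge0 => a0 _.
have [_ O01] := measurable_bounded_augOcc nH h0 s0 a0 s.
by case/andP: (O01 y) => O0 _; rewrite mulr_ge0.
Qed.

Lemma bounded01_occ_mean g n s' y : (n <= H)%N ->
  bounded01 (fun x => occ_mean g n s' (y - x)).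
Proof.
move=> nH; do 3 apply: bounded01_sum => ?.
exact/bounded01Mr/bounded01_augOcc.
Qed.

Lemma occ_meanS g n s y : (n < H)%N ->
  occ_mean g n.+1 s y =
  \sum_a pi (H - n) s y a * g (H - n)%N s a +
  bellman K (H - n) s (occ_mean g n) y.
Proof.
move=> nH; have hstep := step_in_horizon nH; rewrite /occ_mean.
under eq_bigr => h0 _ do under eq_bigr => s0 _ do under eq_bigr => a0 _ do
  rewrite augOccS_split // mulrDl.
under eq_bigr => h0 _ do under eq_bigr => s0 _ do rewrite big_split.
under eq_bigr => h0 _ do rewrite big_split.
rewrite big_split /=; congr (_ + _).
  have h_range : (H - n)%N \in index_iota 1 H.+1 by rewrite mem_index_iota; lia.
  rewrite (bigD1_seq _ h_range (iota_uniq _ _)) /=.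
  rewrite [X in _ + X]big1 ?addr0; last first.
    move=> h0 /negbTE h0h; apply: big1 => s0 _; apply: big1 => a0 _.
    by rewrite eq_sym h0h mul0r.
  rewrite (bigD1 s) //= [X in _ + X]big1 ?addr0; last first.
    move=> s0 /negbTE s0s; apply: big1 => a0 _.
    by rewrite eqxx eq_sym s0s mul0r.
  by apply: eq_bigr => a0 _; rewrite !eqxx.
rewrite (bellman_sum hstep); last first.
  move=> ? ?; do 2 apply: bounded01_sum => ?.
  exact/bounded01Mr/bounded01_augOcc/ltnW.
apply: eq_bigr => h0 _; rewrite (bellman_sum hstep); last first.
  move=> ? ?; apply: bounded01_sum => ?.
  exact/bounded01Mr/bounded01_augOcc/ltnW.
apply: eq_bigr => s0 _; rewrite (bellman_sum hstep); last first.
  by move=> ? ?; exact/bounded01Mr/bounded01_augOcc/ltnW.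
apply: eq_bigr => a0 _; rewrite (bellmanMr hstep) //.
by move=> ?; exact/bounded01_augOcc/ltnW.
Qed.

End kernel.

Definition kernel_dist (P Q : nat -> S -> A -> S -> R) h s a :=
  l1_dist (P h s a) (Q h s a).

Lemma augV_sub_le_occ_mean P Q : is_kernel H P -> is_kernel H Q ->
  forall n, (n <= H)%N -> forall s y, y <= 1 ->
  augV H P r pi n s y - augV H Q r pi n s y <=
  occ_mean P (kernel_dist P Q) n s y.
Proof.
move=> P_kernel Q_kernel; elim=> [_ s y _|n IH nH s y y1].
  by rewrite subrr occ_mean_ge0 // => *; exact: sumr_ge0.
have hstep := step_in_horizon nH.
rewrite !augV_S occ_meanS // {1}/kernel_dist.
apply: (bellman_sub_le hstep s P_kernel Q_kernel) => s'.
- exact/bounded01_augV/ltnW.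
- exact/bounded01_augV/ltnW.
- exact/bounded01_occ_mean/ltnW.
- move=> x /andP[x0 _].
  have [_ QV] := measurable_bounded_augV Q_kernel (ltnW nH) s'.
  have /andP[V0 V1] := QV (y - x).
  by rewrite V0 (le_trans V1) // ge_max ler01 andbT (le_trans _ y1) // gerBl.
- move=> x /andP[x0 _]; apply: IH (ltnW nH) _ _ _.
  by rewrite (le_trans _ y1) // gerBl.
Qed.

End augmented_MDP.

Theorem lemma3 (R : realType) (S A : finType) (H : nat)
  (P Phat : nat -> S -> A -> S -> R)
  (r : nat -> S -> A -> probability R R)
  (pi : nat -> S -> R -> A -> R) (s1 : S) (c : R) :
  is_kernel H P -> is_kernel H Phat ->
  (forall h, (0 < h <= H)%N -> forall s a,
     r h s a [set x : R | 0 <= x <= 1] = 1%E) ->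
  is_aug_policy H pi ->
  0 <= c <= 1 ->
  V1 H P r pi s1 c - V1 H Phat r pi s1 c <=
  H%:R * \sum_(1 <= h < H.+1)
           \sum_(s : S) \sum_(a : A)
             occ H P r pi s1 c h s a *
             \sum_(s' : S) `|P h s a s' - Phat h s a s'|.
Proof.
move=> P_kernel Phat_kernel r01 pi_policy /andP[_ c1].
pose bound := occ_mean H r pi P (kernel_dist P Phat) H s1 c.
have bound_ge0 : 0 <= bound.
  by apply: (occ_mean_ge0 r01 pi_policy P_kernel) => // *; exact: sumr_ge0.
have le_bound_Hbound : bound <= H%:R * bound.
  have [H0|H_gt0] := posnP H; last by rewrite ler_peMl // ler1n.
  by rewrite /bound /occ_mean H0 big_geq ?mulr0.
exact: le_trans (augV_sub_le_occ_mean r01 pi_policy P_kernel Phat_kernel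
  (leqnn H) s1 c1) le_bound_Hbound.
Qed.
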